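(* Let $\mathcal T$ be a locally finite tessellation of ${\mathbb X}$ and $x\in{\mathbb X}$. Let $C=\bigcap_{T\in\mathcal T,\,x\in T}T$. Then $C$ is a cell of $\mathcal T$ and $x\in C^r$.
   Context: ${\mathbb X}$ is $\mathbb R^n$, the unit sphere $\mathbb S^n$, or hyperbolic $n$-space. A hyperplane is a complete totally geodesic submanifold of codimension 1; closed half-spaces are the closures of the two components of its complement. A polyhedron is a nonempty intersection of a family of closed half-spaces whose boundary hyperplanes form a locally finite family; its relative interior $C^r$ is its interior in the smallest complete totally geodesic submanifold containing it; it is thick if it has nonempty interior in ${\mathbb X}$. A tessellation is a set of thick polyhedra (tiles) covering ${\mathbb X}$ with pairwise disjoint interiors; locally finite means every compact set meets only finitely many tiles. A cell of $\mathcal T$ is a nonempty intersection $C$ of tiles such that for every tile $T$ either $C\subseteq T$ or $C^r\cap T=\emptyset$. *)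

From HB Require Import structures.
From mathcomp Require Import all_boot all_order all_algebra.
From mathcomp Require Import all_classical all_reals all_analysis.
Set Implicit Arguments. Unset Strict Implicit. Unset Printing Implicit Defensive.
Import Order.TTheory GRing.Theory Num.Theory.
Import numFieldNormedType.Exports.
Local Open Scope classical_set_scope.
Local Open Scope ring_scope.

(* The three model geometries, all realised inside R^(n+1) = 'rV[R]_(n.+1):
   - Euclid     : R^n        = { x | x_n = 1 }                (affine chart)
   - Sphere     : S^n        = { x | sum_i x_i^2 = 1 }
   - Hyperbolic : H^n        = { x | sum_(i<n) x_i^2 - x_n^2 = -1, x_n > 0 }
     (hyperboloid model).
   In each of these models the complete totally geodesic submanifolds are
   exactly the nonempty sets  X ∩ L  with L a linear subspace of R^(n+1)
   (of dimension dim + 1), and the topology is the one induced by R^(n+1). *)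
Inductive geometry := Euclid | Sphere | Hyperbolic.

Section Geom.
Variables (R : realType) (n : nat).
Local Notation V := 'rV[R]_(n.+1).

Definition dotp (u x : V) : R := \sum_(i < n.+1) u ord0 i * x ord0 i.

Definition Xspace (g : geometry) : set V :=
  match g with
  | Euclid => [set x | x ord0 ord_max = 1]
  | Sphere => [set x | \sum_(i < n.+1) x ord0 i ^+ 2 = 1]
  | Hyperbolic => [set x | \sum_(i < n.+1 | i != ord_max) x ord0 i ^+ 2
                            - x ord0 ord_max ^+ 2 = -1 /\ 0 < x ord0 ord_max]
  end.

Definition tg_submanifold (g : geometry) (M : set V) : Prop :=
  exists L : {vspace V}, M = Xspace g `&` [set x | x \in L] /\ M !=set0.

Definition hyperplane (g : geometry) (H : set V) : Prop :=
  exists L : {vspace V}, \dim L = n /\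
    H = Xspace g `&` [set x | x \in L] /\ H !=set0.

(* The hyperplane { x in X | <u,x> = 0 } (u <> 0) and the closures of the two
   components of its complement, { x in X | <u,x> >= 0 } and
   { x in X | <u,x> <= 0 } = { x in X | <-u,x> >= 0 }. *)
Definition hyp_of (g : geometry) (u : V) : set V :=
  Xspace g `&` [set x | dotp u x = 0].
Definition halfspace_of (g : geometry) (u : V) : set V :=
  Xspace g `&` [set x | 0 <= dotp u x].

Definition closed_halfspace (g : geometry) (S H : set V) : Prop :=
  hyperplane g H /\
  exists u : V, u != 0 /\ hyp_of g u !=set0 /\
    S = halfspace_of g u /\ H = hyp_of g u.

Definition locally_finite_family (g : geometry) (F : set (set V)) : Prop :=
  forall x, Xspace g x -> exists e : R, 0 < e /\
    finite_set [set H | F H /\ (H `&` ball x e) !=set0].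

Definition polyhedron (g : geometry) (P : set V) : Prop :=
  exists F : set (set V),
    (forall S, F S -> exists H, closed_halfspace g S H) /\
    locally_finite_family g
      [set H | exists2 S, F S & closed_halfspace g S H] /\
    P = Xspace g `&` \bigcap_(S in F) S /\
    P !=set0.

Definition interior_in (M A : set V) : set V :=
  [set a | A a /\ exists e : R, 0 < e /\ (ball a e `&` M) `<=` A].

Definition tg_hull (g : geometry) (C : set V) : set V :=
  [set p | Xspace g p /\ forall M, tg_submanifold g M -> C `<=` M -> M p].

Definition rel_interior (g : geometry) (C : set V) : set V :=
  interior_in (tg_hull g C) C.

Definition thick (g : geometry) (P : set V) : Prop :=
  interior_in (Xspace g) P !=set0.

Definition tessellation (g : geometry) (T : set (set V)) : Prop :=
  (forall t, T t -> polyhedron g t /\ thick g t) /\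
  (forall x, Xspace g x -> exists2 t, T t & t x) /\
  (forall t1 t2, T t1 -> T t2 -> t1 <> t2 ->
     interior_in (Xspace g) t1 `&` interior_in (Xspace g) t2 = set0).

Definition locally_finite_tess (g : geometry) (T : set (set V)) : Prop :=
  forall K : set V, K `<=` Xspace g -> compact K ->
    finite_set [set t | T t /\ (t `&` K) !=set0].

Definition cell (g : geometry) (T : set (set V)) (C : set V) : Prop :=
  (exists F : set (set V), F `<=` T /\ F !=set0 /\ C = \bigcap_(t in F) t) /\
  C !=set0 /\
  (forall t, T t -> C `<=` t \/ rel_interior g C `&` t = set0).

End Geom.

From HB Require Import structures.
From mathcomp Require Import all_boot all_order all_algebra.
From mathcomp Require Import all_classical all_reals all_analysis.
From mathcomp Require Import ring lra.
Set Implicit Arguments. Unset Strict Implicit. Unset Printing Implicit Defensive.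
Import Order.TTheory GRing.Theory Num.Theory.
Import numFieldNormedType.Exports. Import Num.Def.
Local Open Scope classical_set_scope.
Local Open Scope ring_scope.

(* Each model space sits in R^(n+1) so that a closed half-space is
   X ∩ {v | <u, v> >= 0}; every tile is therefore X ∩ K for a closed convex
   cone K, and a central projection v |-> v / κ(v) maps a neighbourhood of X
   onto X.  Only finitely many tiles meet a neighbourhood of x, namely the
   tiles at x.  The heart of the argument is that the intersection of their
   cones is reflected at x: if z lies in it and x - z projects close to x,
   then x - z lies in it too, for otherwise two tiles at x would share
   interior points (by a finite Baire property of the cover near x).  Hence
   the directions v with x ± εv in all these cones form a linear subspace
   containing C, so a neighbourhood of x in the hull of C lies in C, i.e.
   x ∈ C^r.  Conversely, if a tile t meets C^r at y, push y slightly away from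
   x inside C: a neighbourhood of y is then covered by the tiles at x, and t,
   having interior points arbitrarily close to y, must be one of them. *)

Section NormedSpace.
Variables (R : realType) (V : normedModType R).

Lemma ball_norm_lt (a w : V) (e : R) : ball a e w <-> `|a - w| < e.
Proof. by rewrite -ball_normE. Qed.

Lemma continuous_at_dist (W : normedModType R) (f : V -> W) v :
  {for v, continuous f} -> forall e, 0 < e ->
  exists2 d, 0 < d & forall w, `|v - w| < d -> `|f v - f w| < e.
Proof.
move=> /cvgrPdist_lt fv e e0; have /nbhs_ballP [d d0 Hd] := fv e e0.
by exists d => // w /ball_norm_lt /Hd.
Qed.

Lemma gt0_near (f : V -> R) v : {for v, continuous f} -> 0 < f v ->
  exists2 d, 0 < d & forall w, `|v - w| < d -> 0 < f w.
Proof.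
move=> fv f0; have [d d0 Hd] := @continuous_at_dist R^o f v fv _ f0.
by exists d => // w /Hd; have := ler_norm (f v - f w); lra.
Qed.

Lemma seq_common_radius (A : eqType) (s : seq A) (Q : A -> R -> Prop) :
  (forall a d d', Q a d -> 0 < d' -> d' <= d -> Q a d') ->
  (forall a, a \in s -> exists2 d, 0 < d & Q a d) ->
  exists2 d, 0 < d & forall a, a \in s -> Q a d.
Proof.
move=> Qmono; elim: s => [|a s IH] Hs; first by exists 1.
have [d1 d10 H1] := Hs a (mem_head _ _).
have [d2 d20 H2] : exists2 d, 0 < d & forall b, b \in s -> Q b d.
  by apply: IH => b bs; apply: Hs; rewrite in_cons bs orbT.
have m0 : 0 < minr d1 d2 by rewrite lt_min d10 d20.
exists (minr d1 d2) => // b; rewrite in_cons => /orP [/eqP ->|bs].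
  by apply: Qmono H1 m0 _; rewrite ge_min lexx.
by apply: Qmono (H2 b bs) m0 _; rewrite ge_min lexx orbT.
Qed.

End NormedSpace.

Section CentralProjection.
Variables (R : realType) (V : normedModType R) (X : set V).

Record central_projection := CentralProjection {
  cp_dom : set V;
  cp_scale : V -> R;
  cp_dom_open : forall v, cp_dom v ->
    exists2 d, 0 < d & forall w, `|v - w| < d -> cp_dom w;
  cp_dom_X : X `<=` cp_dom;
  cp_scale_gt0 : forall v, cp_dom v -> 0 < cp_scale v;
  cp_scale_X : forall v, X v -> cp_scale v = 1;
  cp_domZ : forall l v, 0 < l -> cp_dom v -> cp_dom (l *: v);
  cp_scaleZ : forall l v, 0 < l -> cp_dom v ->
    cp_scale (l *: v) = l * cp_scale v;
  cp_rescaleX : forall v, cp_dom v -> X ((cp_scale v)^-1 *: v);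
  cp_scale_continuous : continuous cp_scale }.

Lemma central_projection_of_scale (f k : V -> R) :
  continuous f -> continuous k ->
  (forall v, X v -> 0 < f v) -> (forall v, X v -> k v = 1) ->
  (forall l v, 0 < l -> 0 < f v -> 0 < f (l *: v)) ->
  (forall l v, 0 < l -> k (l *: v) = l * k v) ->
  (forall v, 0 < f v -> 0 < k v -> X ((k v)^-1 *: v)) ->
  inhabited central_projection.
Proof.
move=> fc kc Xf Xk fZ kZ kX.
pose D := [set v | 0 < f v /\ 0 < k v].
have D_open v : D v -> exists2 d, 0 < d & forall w, `|v - w| < d -> D w.
  move=> [fv kv]; have [d1 d10 H1] := gt0_near (fc v) fv.
  have [d2 d20 H2] := gt0_near (kc v) kv.
  exists (minr d1 d2) => [|w]; first by rewrite lt_min d10 d20.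
  by rewrite lt_min => /andP [w1 w2]; split; [exact: H1 | exact: H2].
have DX : X `<=` D by move=> v Xv; split; [exact: Xf | rewrite Xk].
have DZ l v : 0 < l -> D v -> D (l *: v).
  by move=> l0 [fv kv]; split; [exact: fZ | rewrite kZ // mulr_gt0].
have Dk v : D v -> 0 < k v by case.
have DkZ l v : 0 < l -> D v -> k (l *: v) = l * k v by move=> l0 _; exact: kZ.
have DkX v : D v -> X ((k v)^-1 *: v) by case=> fv kv; exact: kX.
exact: inhabits (CentralProjection D_open DX Dk Xk DZ DkZ DkX kc).
Qed.

Variable p : central_projection.

Definition cp_proj v := (cp_scale p v)^-1 *: v.

Lemma cp_proj_X v : cp_dom p v -> X (cp_proj v).
Proof. exact: cp_rescaleX. Qed.

Lemma cp_proj_id v : X v -> cp_proj v = v.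
Proof. by move=> Xv; rewrite /cp_proj cp_scale_X // invr1 scale1r. Qed.

Lemma cp_projK v : cp_dom p v -> cp_scale p v *: cp_proj v = v.
Proof.
by move=> Dv; rewrite scalerA mulfV ?scale1r // gt_eqF // cp_scale_gt0.
Qed.

Lemma cp_projZ l v : 0 < l -> cp_dom p v -> cp_proj (l *: v) = cp_proj v.
Proof.
move=> l0 Dv; rewrite /cp_proj cp_scaleZ // scalerA invfM mulrAC mulVf ?gt_eqF //.
by rewrite mul1r.
Qed.

Lemma cp_proj_near v e : cp_dom p v -> 0 < e ->
  exists2 d, 0 < d & forall w, `|v - w| < d ->
    cp_dom p w /\ `|cp_proj v - cp_proj w| < e.
Proof.
move=> Dv e0.
have kv : cp_scale p v != 0 by rewrite gt_eqF // cp_scale_gt0.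
have pc : {for v, continuous cp_proj}.
  apply: continuousZ; last exact: cvg_id.
  by apply: continuousV => //; exact: cp_scale_continuous.
have [d1 d10 H1] := continuous_at_dist pc e0.
have [d2 d20 H2] := cp_dom_open Dv.
exists (minr d1 d2) => [|w]; first by rewrite lt_min d10 d20.
by rewrite lt_min => /andP [w1 w2]; split; [exact: H2 | exact: H1].
Qed.

Lemma cp_proj_ray y u e : X y -> 0 < e ->
  exists2 l, 0 < l & cp_dom p (y + l *: u) /\ `|y - cp_proj (y + l *: u)| < e.
Proof.
move=> Xy e0; have [d d0 Hd] := cp_proj_near (cp_dom_X p Xy) e0.
have u0 : 0 < `|u| + 1 by rewrite ltr_wpDl.
exists (d / (2 * (`|u| + 1))); first by rewrite divr_gt0 ?mulr_gt0.
rewrite -{2}(cp_proj_id Xy); apply: Hd.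
rewrite opprD addrA subrr add0r normrN normrZ gtr0_norm ?divr_gt0 ?mulr_gt0 //.
rewrite mulrAC ltr_pdivrMr ?mulr_gt0 // ltr_pM2l //; have := normr_ge0 u; lra.
Qed.

End CentralProjection.

Section ConeTiling.
Variables (R : realType) (V : normedModType R) (X : set V).

Definition convex_cone (P : set V) :=
  (forall a b, P a -> P b -> P (a + b)) /\
  (forall l a, 0 < l -> P a -> P (l *: a)).

Definition interior_within (A : set V) (a : V) :=
  A a /\ exists2 e, 0 < e & forall w, `|a - w| < e -> X w -> A w.

Definition closed_within (A : set V) :=
  forall v, X v -> ~ A v -> exists2 d, 0 < d & forall w, `|v - w| < d -> ~ A w.

Definition covers_near (s : seq (set V)) (y : V) (rho : R) :=
  forall w, X w -> `|y - w| < rho -> exists2 t, t \in s & t w.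

Record cone_tiling (T : set (set V)) := ConeTiling {
  tile_cone : forall t, T t -> exists2 P, convex_cone P & t = X `&` P;
  tile_closed : forall t, T t -> closed_within t;
  tile_thick : forall t, T t -> exists a, interior_within t a;
  tile_disjoint : forall t1 t2 a, T t1 -> T t2 ->
    interior_within t1 a -> interior_within t2 a -> t1 = t2 }.

Definition cone_over (t : set V) (v : V) :=
  forall P, convex_cone P -> t = X `&` P -> P v.

Lemma cone_overD t a b : cone_over t a -> cone_over t b -> cone_over t (a + b).
Proof. by move=> ha hb P cP tE; apply: cP.1; [apply: ha | apply: hb]. Qed.

Lemma cone_overZ t l a : 0 < l -> cone_over t a -> cone_over t (l *: a).
Proof. by move=> l0 ha P cP tE; apply: cP.2 => //; apply: ha. Qed.

Lemma cone_over_mem t a : t a -> cone_over t a.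
Proof. by move=> ta P cP tE; move: ta; rewrite tE => -[]. Qed.

Lemma tile_subX T (TT : cone_tiling T) t : T t -> t `<=` X.
Proof. by move=> Tt v; have [P _ ->] := tile_cone TT Tt; case. Qed.

Lemma closed_within_setI (K : set V) : closed K -> closed_within (X `&` K).
Proof.
move=> Kcl v Xv nvK.
have /nbhs_ballP [d d0 Hd] : nbhs v (~` K).
  by apply: open_nbhs_nbhs; split; [exact: closed_openC | move=> Kv; apply: nvK].
by exists d => // w /ball_norm_lt vw [_ Kw]; exact: Hd w vw Kw.
Qed.

Lemma interior_within_open t a : interior_within t a ->
  exists2 e, 0 < e & forall b, `|a - b| < e -> X b -> interior_within t b.
Proof.
move=> [ta [e e0 He]]; exists (e / 2) => [|b hb Xb]; first by rewrite divr_gt0.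
split; first by apply: He => //; lra.
exists (e / 2) => [|w hw Xw]; first by rewrite divr_gt0.
apply: He => //; apply: le_lt_trans (ler_distD b a w) _; lra.
Qed.

Lemma closed_cover_interior (s : seq (set V)) q rho :
  (forall t, t \in s -> closed_within t) -> X q -> 0 < rho -> covers_near s q rho ->
  exists2 t, t \in s & exists2 a, `|q - a| < rho & interior_within t a.
Proof.
elim: s q rho => [|t0 s IH] q rho scl Xq rho0 cov.
  by have := cov q Xq; rewrite subrr normr0 => /(_ rho0) [t]; rewrite in_nil.
have [[w [Xw qw ntw]]|] :=
  pselect (exists w, [/\ X w, `|q - w| < rho & ~ t0 w]); last first.
  move=> H; have t0near w : X w -> `|q - w| < rho -> t0 w.
    by move=> Xw qw; apply: contrapT => ntw; apply: H; exists w.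
  exists t0; first exact: mem_head.
  exists q; first by rewrite subrr normr0.
  split; first by apply: t0near => //; rewrite subrr normr0.
  by exists rho => // v qv Xv; apply: t0near.
have [d d0 Hd] := scl t0 (mem_head _ _) w Xw ntw.
have m0 : 0 < minr d (rho - `|q - w|) by rewrite lt_min d0 subr_gt0 qw.
have scl' t : t \in s -> closed_within t.
  by move=> ts; apply: scl; rewrite in_cons ts orbT.
have covw : covers_near s w (minr d (rho - `|q - w|)).
  move=> v Xv; rewrite lt_min => /andP [wv1 wv2].
  have [|t] := cov v Xv; first by apply: le_lt_trans (ler_distD w q v) _; lra.
  rewrite in_cons => /orP [/eqP -> /(Hd v wv1) //|ts tv].
  by exists t.
have [t ts [a wa ia]] := IH w _ scl' Xw m0 covw.
exists t; first by rewrite in_cons ts orbT.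
exists a => //; apply: le_lt_trans (ler_distD w q a) _.
by move: wa; rewrite lt_min => /andP [_]; lra.
Qed.

Variable p : central_projection X.
Local Notation proj := (cp_proj p).

Lemma proj_memP t P c : convex_cone P -> t = X `&` P -> cp_dom p c ->
  t (proj c) <-> P c.
Proof.
move=> [_ PZ] tE Dc; rewrite tE; split => [[_ Pc]|Pc].
  by rewrite -(cp_projK Dc); apply: PZ Pc; exact: cp_scale_gt0.
by split; [exact: cp_proj_X | apply: PZ Pc; rewrite invr_gt0 cp_scale_gt0].
Qed.

Lemma cone_over_proj t c : cp_dom p c -> t (proj c) -> cone_over t c.
Proof. by move=> Dc tc P cP tE; apply/(proj_memP cP tE Dc). Qed.

Lemma proj_mem_cone_over t c : (exists2 P, convex_cone P & t = X `&` P) ->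
  cp_dom p c -> cone_over t c -> t (proj c).
Proof. by move=> [P cP tE] Dc tc; apply/(proj_memP cP tE Dc); exact: tc. Qed.

Lemma interior_within_proj t P a b l : convex_cone P -> t = X `&` P ->
  interior_within t a -> P b -> 0 < l -> cp_dom p (l *: a + b) ->
  interior_within t (proj (l *: a + b)).
Proof.
move=> cP tE ia Pb l0 Dv; have [ta [rho rho0 Hrho]] := ia.
have [PD PZ] := cP.
have [Xa Pa] : X a /\ P a by move: ta; rewrite tE.
set v := l *: a + b in Dv *.
have k0 := cp_scale_gt0 Dv; set k := cp_scale p v in k0.
split; first by apply/(proj_memP cP tE Dv); apply: PD => //; exact: PZ.
have [d d0 Hd] := cp_proj_near (cp_dom_X p Xa) rho0.
exists (d * l / k) => [|s hs Xs]; first by rewrite divr_gt0 // mulr_gt0.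
(* [s] is the projection of [l *: w + b], with [w] close to [a] *)
pose w := l^-1 *: (k *: s - b).
have Eaw : a - w = (l^-1 * k) *: (proj v - s).
  rewrite -scalerA scalerBr cp_projK // /w /v -{1}[a]scale1r.
  rewrite -(mulVf (lt0r_neq0 l0)) -scalerA -scalerBr.
  by congr (_ *: _); rewrite opprB addrA.
have aw : `|a - w| < d.
  rewrite Eaw normrZ gtr0_norm ?mulr_gt0 ?invr_gt0 //.
  have -> : d = l^-1 * k * (d * l / k) by field; rewrite ?lt0r_neq0.
  by rewrite ltr_pM2l // mulr_gt0 ?invr_gt0.
have [Dw aw'] := Hd w aw; rewrite cp_proj_id // in aw'.
have Pw : P w by apply/(proj_memP cP tE Dw); apply: Hrho aw' (cp_proj_X Dw).
have Pks : P (k *: s).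
  have -> : k *: s = l *: w + b by rewrite /w scalerA mulfV ?gt_eqF // scale1r subrK.
  exact: PD (PZ _ _ l0 Pw) Pb.
have Ds := cp_dom_X p Xs.
by rewrite -(cp_proj_id p Xs) -(cp_projZ k0 Ds); apply/(proj_memP cP tE (cp_domZ k0 Ds)).
Qed.

Lemma interior_within_dense t P a y : convex_cone P -> t = X `&` P ->
  interior_within t a -> t y ->
  forall e, 0 < e -> exists2 b, interior_within t b & `|y - b| < e.
Proof.
move=> cP tE ia ty e e0.
have [Xy Py] : X y /\ P y by move: ty; rewrite tE.
have [l l0 [Dv yv]] := cp_proj_ray p a Xy e0; rewrite addrC in Dv yv.
by exists (proj (l *: a + y)) => //; exact: interior_within_proj cP tE ia Py l0 Dv.
Qed.

Variables (T : set (set V)) (TT : cone_tiling T).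

Lemma not_cone_over_near t v : T t -> cp_dom p v -> ~ cone_over t v ->
  exists2 d, 0 < d & forall w, `|v - w| < d -> ~ cone_over t w.
Proof.
move=> Tt Dv nv.
have ntv : ~ t (proj v) by move/(cone_over_proj Dv).
have [e e0 He] := tile_closed TT Tt (cp_proj_X Dv) ntv.
have [d d0 Hd] := cp_proj_near Dv e0.
exists d => // w /Hd [Dw vw] /(proj_mem_cone_over (tile_cone TT Tt) Dw).
exact: He.
Qed.

(* Interior points of [t] near [y] are, by the finite Baire property, interior
   to one of the covering tiles. *)
Lemma tile_mem_cover (s : seq (set V)) t y rho :
  (forall t', t' \in s -> T t') -> T t -> t y -> 0 < rho -> covers_near s y rho ->
  t \in s.
Proof.
move=> sT Tt ty rho0 cov.
have [P cP tE] := tile_cone TT Tt; have [a0 ia0] := tile_thick TT Tt.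
have rho20 : 0 < rho / 2 by rewrite divr_gt0.
have [a ia ya] := interior_within_dense cP tE ia0 ty rho20.
have [e e0 He] := interior_within_open ia.
have Xa : X a := tile_subX TT Tt ia.1.
have m0 : 0 < minr e (rho / 2) by rewrite lt_min e0 rho20.
have cova : covers_near s a (minr e (rho / 2)).
  move=> w Xw; rewrite lt_min => /andP [_ aw]; apply: (cov w Xw).
  by apply: le_lt_trans (ler_distD a y w) _; lra.
have scl t' : t' \in s -> closed_within t' by move=> /sT; exact: tile_closed.
have [t' t's [b ab ib]] := closed_cover_interior scl Xa m0 cova.
have itb : interior_within t b.
  apply: He (tile_subX TT (sT _ t's) ib.1).
  by move: ab; rewrite lt_min => /andP [].
by rewrite -(tile_disjoint TT (sT _ t's) Tt ib itb).
Qed.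

End ConeTiling.

Section LocalCell.
Variables (R : realType) (V : normedModType R) (X : set V).
Variables (p : central_projection X) (T : set (set V)) (TT : cone_tiling X T).
Variables (x : V) (sx : seq (set V)) (r : R).
Hypotheses (Xx : X x) (sx_tiles : forall t, t \in sx -> T t).
Hypotheses (sx_x : forall t, t \in sx -> t x) (r_gt0 : 0 < r).
Hypothesis sx_cover : covers_near X sx x r.
Local Notation proj := (cp_proj p).

Definition local_cell := [set c | forall t, t \in sx -> t c].

Definition local_cone (u : V) := forall t, t \in sx -> cone_over X t u.

Lemma local_coneD a b : local_cone a -> local_cone b -> local_cone (a + b).
Proof. by move=> ha hb t ts; apply: cone_overD; [apply: ha | apply: hb]. Qed.

Lemma local_coneZ l a : 0 < l -> local_cone a -> local_cone (l *: a).
Proof. by move=> l0 ha t ts; apply: cone_overZ => //; apply: ha. Qed.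

Lemma local_cone_cell c : local_cell c -> local_cone c.
Proof. by move=> Cc t ts; apply: cone_over_mem; exact: Cc. Qed.

Lemma local_cone_tile t c : t \in sx -> cp_dom p c -> local_cone c -> t (proj c).
Proof.
by move=> ts Dc Kc; exact: proj_mem_cone_over (tile_cone TT (sx_tiles ts)) Dc (Kc t ts).
Qed.

Lemma other_tile_interior_near j q rho : j \in sx -> X q -> `|x - q| < r ->
  ~ j q -> 0 < rho ->
  exists i, [/\ i \in sx, i <> j & exists2 a, `|q - a| < rho & interior_within X i a].
Proof.
move=> js Xq xq njq rho0.
have [d d0 Hd] := tile_closed TT (sx_tiles js) Xq njq.
set m := minr d (minr (r - `|x - q|) rho).
have m0 : 0 < m by rewrite !lt_min d0 subr_gt0 xq rho0.
have cl t : t \in [seq t <- sx | t != j] -> closed_within X t.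
  by rewrite mem_filter => /andP [_ /sx_tiles]; exact: tile_closed.
have cov : covers_near X [seq t <- sx | t != j] q m.
  move=> w Xw; rewrite !lt_min => /andP [qw1 /andP [qw2 _]].
  have [|t ts tw] := sx_cover Xw; first by apply: le_lt_trans (ler_distD q x w) _; lra.
  exists t => //; rewrite mem_filter ts andbT.
  by apply/eqP => tj; apply: (Hd w qw1); rewrite -tj.
have [i] := closed_cover_interior cl Xq m0 cov.
rewrite mem_filter => /andP [/eqP ij isx] [a qa ia]; exists i; split => //.
by exists a => //; move: qa; rewrite !lt_min => /and3P [].
Qed.

(* The key step: near [x], the local cone is stable under [z |-> x - z].
   Otherwise some tile [j] at [x] would miss the projection of [a - z] for
   interior points [a] of [j] near [x]; another tile [i] at [x] then has
   interior points [q'] near that projection, and pushing [q'] back along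
   [z] gives points interior to both [i] and [j]. *)
Lemma local_coneB z : local_cone z -> cp_dom p (x - z) -> `|x - proj (x - z)| < r ->
  local_cone (x - z).
Proof.
move=> Kz Dxz xr j js; apply: contrapT => njxz.
have Tj := sx_tiles js; have [P cP jE] := tile_cone TT Tj.
have [d1 d10 Hd1] := not_cone_over_near TT Tj Dxz njxz.
have gap0 : 0 < r - `|x - proj (x - z)| by rewrite subr_gt0.
have [d2 d20 Hd2] := cp_proj_near Dxz gap0.
have m0 : 0 < minr d1 d2 by rewrite lt_min d10 d20.
have [a0 ia0] := tile_thick TT Tj.
have [a ia] := interior_within_dense p cP jE ia0 (sx_x js) m0.
rewrite lt_min => /andP [xa1 xa2].
have Exa : (x - z) - (a - z) = x - a by rewrite opprB addrA subrK.
have njaz : ~ cone_over X j (a - z) by apply: Hd1; rewrite Exa.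
have xaz : `|(x - z) - (a - z)| < d2 by rewrite Exa.
have [Daz az] := Hd2 _ xaz.
set q := proj (a - z) in az.
have xq : `|x - q| < r by apply: le_lt_trans (ler_distD (proj (x - z)) x q) _; lra.
have njq : ~ j q by move/(cone_over_proj Daz).
have k0 := cp_scale_gt0 Daz; set k := cp_scale p (a - z) in k0.
have aE : a = k *: q + z by rewrite /k /q cp_projK // subrK.
have [e e0 He] := interior_within_open ia.
have Xa : X a := tile_subX TT Tj ia.1.
have [d3 d30 Hd3] := cp_proj_near (cp_dom_X p Xa) e0.
have [i [isx ij [q' qq' iq']]] :=
  other_tile_interior_near js (cp_proj_X Daz) xq njq (divr_gt0 d30 k0).
have [Q cQ iE] := tile_cone TT (sx_tiles isx).
have av : `|a - (k *: q' + z)| < d3.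
  rewrite {1}aE opprD addrACA subrr addr0 -scalerBr normrZ gtr0_norm //.
  by rewrite mulrC -ltr_pdivlMr.
have [Dv av'] := Hd3 _ av; rewrite cp_proj_id // in av'.
have iv : interior_within X i (proj (k *: q' + z)).
  exact: interior_within_proj cQ iE iq' (Kz i isx Q cQ iE) k0 Dv.
have jv : interior_within X j (proj (k *: q' + z)) by apply: He av' (cp_proj_X Dv).
exact: ij (tile_disjoint TT (sx_tiles isx) Tj iv jv).
Qed.

Definition lineality (v : V) := exists2 d, 0 < d & forall e, 0 < e -> e <= d ->
  local_cone (x + e *: v) /\ local_cone (x - e *: v).

Lemma lineality0 : lineality 0.
Proof.
exists 1 => // e _ _; rewrite scaler0 subr0 addr0.
by split; apply: local_cone_cell.
Qed.

Lemma linealityN v : lineality v -> lineality (- v).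
Proof.
move=> [d d0 H]; exists d => // e e0 ed; have [h1 h2] := H e e0 ed.
by rewrite scalerN opprK; split.
Qed.

Lemma linealityZ a v : 0 < a -> lineality v -> lineality (a *: v).
Proof.
move=> a0 [d d0 H]; exists (d / a) => [|e e0 ed]; first by rewrite divr_gt0.
rewrite scalerA; apply: H; first by rewrite mulr_gt0.
by move: ed; rewrite ler_pdivlMr.
Qed.

Lemma linealityD v w : lineality v -> lineality w -> lineality (v + w).
Proof.
move=> [d1 d10 H1] [d2 d20 H2].
have mid e a b : x + e *: (a + b) = 2^-1 *: ((x + (e * 2) *: a) + (x + (e * 2) *: b)).
  rewrite !scalerDr !scalerA (_ : 2^-1 * (e * 2) = e); last by field.
  by rewrite addrACA -scalerDl (_ : 2^-1 + 2^-1 = 1 :> R) ?scale1r //; field.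
exists (minr d1 d2 / 2) => [|e e0 ed]; first by rewrite divr_gt0 // lt_min d10 d20.
have e20 : 0 < e * 2 by rewrite mulr_gt0.
have ed' : e * 2 <= minr d1 d2 by move: ed; rewrite ler_pdivlMr.
have ed1 : e * 2 <= d1 by apply: le_trans ed' _; rewrite ge_min lexx.
have ed2 : e * 2 <= d2 by apply: le_trans ed' _; rewrite ge_min lexx orbT.
have [a1 b1] := H1 _ e20 ed1; have [a2 b2] := H2 _ e20 ed2.
have h20 : 0 < (2 : R)^-1 by rewrite invr_gt0.
split; first by rewrite mid; apply: local_coneZ => //; apply: local_coneD.
rewrite -scalerN opprD mid !scalerN.
by apply: local_coneZ => //; apply: local_coneD.
Qed.

Lemma lineality_lin a v w : lineality v -> lineality w -> lineality (a *: v + w).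
Proof.
move=> hv hw; apply: linealityD => //.
have [a0|a0|->] := ltgtP a 0; last by rewrite scale0r; exact: lineality0.
  by rewrite -[a]opprK scaleNr; apply/linealityN/linealityZ; rewrite ?oppr_gt0.
exact: linealityZ.
Qed.

Lemma local_cell_lineality c : local_cell c -> lineality c.
Proof.
move=> Cc.
have [d d0 Hd] := cp_proj_near (cp_dom_X p Xx) r_gt0.
have c0 : 0 < `|c| + 1 by rewrite ltr_wpDl.
exists (d / (`|c| + 1)) => [|e e0 ed]; first by rewrite divr_gt0.
have Kx := local_cone_cell sx_x; have Kc := local_cone_cell Cc.
split; first by apply: local_coneD => //; apply: local_coneZ.
have xe : `|x - (x - e *: c)| < d.
  rewrite opprB addrC subrK normrZ gtr0_norm //.
  apply: le_lt_trans (_ : d / (`|c| + 1) * `|c| < d).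
    by apply: ler_wpM2r => //; exact: normr_ge0.
  by rewrite mulrAC ltr_pdivrMr // ltr_pM2l //; lra.
have [Dxe xe'] := Hd _ xe; rewrite cp_proj_id // in xe'.
by apply: local_coneB => //; apply: local_coneZ.
Qed.

Lemma lineality_local_cell y : X y -> `|x - y| < r -> lineality y -> local_cell y.
Proof.
move=> Xy xy [d d0 Hd] t ts.
have [_ Kxy] := Hd d d0 (lexx d).
have Dy := cp_dom_X p Xy; have Ddy := cp_domZ d0 Dy.
have E : x - (x - d *: y) = d *: y by rewrite opprB addrC subrK.
have := local_coneB Kxy; rewrite E (cp_projZ d0 Dy) cp_proj_id // => /(_ Ddy xy) Ky.
by have := local_cone_tile ts Ddy Ky; rewrite (cp_projZ d0 Dy) cp_proj_id.
Qed.

(* Near [y], points of X are positive combinations of [y'] and of points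
   near [x]. *)
Lemma local_cell_covers_between l k y y' : 0 < l -> 0 < k -> X y ->
  local_cell y' -> (1 + l) *: y = l *: x + k *: y' ->
  exists2 rho, 0 < rho & covers_near X sx y rho.
Proof.
move=> l0 k0 Xy Cy' Ey.
have Dx := cp_dom_X p Xx; have Dlx := cp_domZ l0 Dx.
have [d d0 Hd] := cp_proj_near Dlx r_gt0.
have l1 : 0 < 1 + l by rewrite ltr_wpDr // ltW.
exists (d / (1 + l)) => [|s Xs ys]; first by rewrite divr_gt0.
pose u := (1 + l) *: s - k *: y'.
have lxu : `|l *: x - u| < d.
  rewrite (_ : l *: x - u = (1 + l) *: (y - s)); last by rewrite scalerBr Ey opprB addrA.
  by rewrite normrZ gtr0_norm // mulrC -ltr_pdivlMr.
have [Du xu] := Hd _ lxu; rewrite (cp_projZ l0 Dx) cp_proj_id // in xu.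
have [t ts tu] := sx_cover (cp_proj_X Du) xu.
exists t => //.
have Ks : cone_over X t ((1 + l) *: s).
  rewrite (_ : (1 + l) *: s = u + k *: y'); last by rewrite /u subrK.
  apply: cone_overD; first exact: cone_over_proj Du tu.
  by apply: cone_overZ k0 _; apply: cone_over_mem; exact: Cy'.
have Ds := cp_dom_X p Xs.
rewrite -(cp_proj_id p Xs) -(cp_projZ l1 Ds).
exact: proj_mem_cone_over (tile_cone TT (sx_tiles ts)) (cp_domZ l1 Ds) Ks.
Qed.

Lemma tile_mem_local_cell_ray t y l : T t -> t y -> 0 < l ->
  cp_dom p (y + l *: (y - x)) -> local_cell (proj (y + l *: (y - x))) -> t \in sx.
Proof.
move=> Tt ty l0 Dv Cy'.
have Ey : (1 + l) *: y =
    l *: x + cp_scale p (y + l *: (y - x)) *: proj (y + l *: (y - x)).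
  by rewrite cp_projK // scalerDl scale1r scalerBr addrCA [l *: x + _]addrC subrK.
have [rho rho0 cov] :=
  local_cell_covers_between l0 (cp_scale_gt0 Dv) (tile_subX TT Tt ty) Cy' Ey.
exact (tile_mem_cover p TT sx_tiles Tt ty rho0 cov).
Qed.

End LocalCell.

Section SubspaceOfPredicate.
Variables (K : fieldType) (vT : vectType K) (P : vT -> Prop).
Hypotheses (P0 : P 0) (P_lin : forall a v w, P v -> P w -> P (a *: v + w)).

Lemma span_sub_pred (s : seq vT) :
  (forall v, v \in s -> P v) -> forall v, v \in span s -> P v.
Proof.
elim: s => [|v0 s IH] Ps v; first by rewrite span_nil memv0 => /eqP ->.
rewrite span_cons => /memv_addP [u /vlineP [k ->] [w ws ->]].
apply: P_lin; first by apply: Ps; exact: mem_head.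
by apply: IH => // y ys; apply: Ps; rewrite in_cons ys orbT.
Qed.

(* Induction on the codimension of the span of finitely many points of [P]. *)
Lemma vspace_of_pred : exists L : {vspace vT}, forall v, v \in L <-> P v.
Proof.
suff : forall m (s : seq vT), (forall v, v \in s -> P v) ->
    (\dim {:vT} <= \dim (span s) + m)%N ->
    exists L : {vspace vT}, forall v, v \in L <-> P v.
  by move=> /(_ (\dim {:vT}) [::]); apply => //; rewrite addnC leq_addr.
elim => [|m IH] s Ps dims.
  exists (span s) => v; split; first exact: span_sub_pred.
  have /eqP -> : span s == fullv by rewrite eqEdim subvf -(addn0 (\dim (span s))).
  by rewrite memvf.
have [Pspan|] := pselect (forall v, P v -> v \in span s).
  by exists (span s) => v; split; [exact: span_sub_pred | exact: Pspan].
move=> /existsNP [v /not_implyP [Pv nv]].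
apply: (IH (v :: s)); first by move=> y; rewrite in_cons => /orP [/eqP ->|/Ps].
apply: leq_trans dims _; rewrite addnS -addSn leq_add2r.
have sub : (span s <= span (v :: s))%VS by rewrite span_cons addvSr.
have [le1 eq1] := dimv_leqif_sup sub; rewrite ltn_neqAle le1 andbT eq1.
apply/negP => /subvP /(_ v); rewrite span_cons.
have := memv_add (memv_line v) (mem0v (span s)); rewrite addr0 => vs /(_ vs).
exact: nv.
Qed.

End SubspaceOfPredicate.

Section ModelSpaces.
Variables (R : realType) (n : nat).
Local Notation V := 'rV[R]_(n.+1).

Definition sqsum (P : pred 'I_n.+1) (v : V) := \sum_(i < n.+1 | P i) v ord0 i ^+ 2.

Definition minkowski (v : V) :=
  sqsum (fun i => i != ord_max) v - v ord0 ord_max ^+ 2.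

Lemma last_coord_continuous : continuous (fun v : V => v ord0 ord_max).
Proof. exact: coord_continuous. Qed.

Lemma sqsum_continuous P : continuous (sqsum P).
Proof.
apply: (@continuous_big R^o _ +%R 0 P add_continuous) => i _ v.
by apply: continuousM; exact: coord_continuous.
Qed.

Lemma minkowski_continuous : continuous minkowski.
Proof.
move=> v; apply: continuousB; first exact: sqsum_continuous.
by apply: continuousM; exact: last_coord_continuous.
Qed.

Lemma sqsumZ P l v : sqsum P (l *: v) = l ^+ 2 * sqsum P v.
Proof. by rewrite /sqsum mulr_sumr; apply: eq_bigr => i _; rewrite mxE exprMn. Qed.

Lemma minkowskiZ l v : minkowski (l *: v) = l ^+ 2 * minkowski v.
Proof. by rewrite /minkowski sqsumZ mxE exprMn mulrBr. Qed.

Lemma sqsum_ge0 P v : 0 <= sqsum P v.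
Proof. by apply: sumr_ge0 => i _; exact: sqr_ge0. Qed.

Lemma Xspace_projection g : inhabited (central_projection (@Xspace R n g)).
Proof.
have xc := last_coord_continuous.
have xZ l (v : V) : 0 < l -> 0 < v ord0 ord_max -> 0 < (l *: v) ord0 ord_max.
  by move=> l0 v0; rewrite mxE mulr_gt0.
case: g.
- apply: (central_projection_of_scale xc xc) => // [v ->|l v _|v v0 _] //=.
    by rewrite mxE.
  by rewrite mxE mulVf ?gt_eqF.
- pose k v := Num.sqrt (sqsum xpredT v).
  have kc : continuous k.
    by move=> v; apply: continuous_comp; [exact: sqsum_continuous | exact: sqrt_continuous].
  have kZ l v : 0 < l -> k (l *: v) = l * k v.
    by move=> l0; rewrite /k sqsumZ sqrtrM ?sqr_ge0 // sqrtr_sqr gtr0_norm.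
  have kX v : Xspace Sphere v -> k v = 1 by move=> vs; rewrite /k [sqsum _ _]vs sqrtr1.
  apply: (central_projection_of_scale kc kc) => // [v /kX ->|l v l0 v0|v v0 _] //.
    by rewrite kZ // mulr_gt0.
  change (sqsum xpredT ((k v)^-1 *: v) = 1).
  rewrite sqsumZ exprVn sqr_sqrtr ?sqsum_ge0 // mulVf // gt_eqF //.
  by rewrite -sqrtr_gt0.
- pose k v := Num.sqrt (- minkowski v).
  have mc : continuous (fun v => - minkowski v).
    by move=> v; apply: continuousN; exact: minkowski_continuous.
  have kc : continuous k.
    by move=> v; apply: continuous_comp; [exact: mc | exact: sqrt_continuous].
  have kZ l v : 0 < l -> k (l *: v) = l * k v.
    by move=> l0; rewrite /k minkowskiZ -mulrN sqrtrM ?sqr_ge0 // sqrtr_sqr gtr0_norm.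
  have kX v : Xspace Hyperbolic v -> k v = 1.
    by case=> vm _; rewrite /k [minkowski _]vm opprK sqrtr1.
  apply: (central_projection_of_scale xc kc) => // [v []|v v0 k0] //.
  have m0 : 0 < - minkowski v by rewrite -sqrtr_gt0.
  split; last by rewrite mxE mulr_gt0 // invr_gt0.
  change (minkowski ((k v)^-1 *: v) = -1).
  rewrite minkowskiZ exprVn sqr_sqrtr ?ltW //.
  by rewrite -mulrNN mulNr mulVf ?gt_eqF // opprK.
Qed.

Lemma Xspace_closed g : closed (@Xspace R n g).
Proof.
case: g.
- exact (@preimage_closed _ _ (fun v : V => v ord0 ord_max) [set y : R | y = 1]
    (fun v _ => @last_coord_continuous v) (closed_eq (y := 1))).
- exact (@preimage_closed _ _ (sqsum xpredT) [set y : R | y = 1]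
    (fun v _ => @sqsum_continuous xpredT v) (closed_eq (y := 1))).
have -> : @Xspace R n Hyperbolic =
    minkowski @^-1` [set y | y = -1] `&`
    (fun v : V => v ord0 ord_max) @^-1` [set y | 0 <= y].
  apply/seteqP; split => v [mv xv]; split => //; first exact: ltW.
  (* on the hyperboloid [minkowski v = -1] the last coordinate cannot vanish *)
  rewrite lt_neqAle xv andbT; apply/eqP => x0.
  have : minkowski v = -1 := mv; rewrite /minkowski -x0 expr0n /= subr0.
  by have := sqsum_ge0 (fun i => i != ord_max) v; lra.
apply: closedI.
  exact (@preimage_closed _ _ minkowski _ (fun v _ => @minkowski_continuous v) (closed_eq (y := -1))).
exact (@preimage_closed _ _ (fun v : V => v ord0 ord_max) _
  (fun v _ => @last_coord_continuous v) (closed_ge (y := 0))).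
Qed.

End ModelSpaces.

Section ModelTilings.
Variables (R : realType) (n : nat) (g : geometry).
Local Notation V := 'rV[R]_(n.+1).
Local Notation X := (@Xspace R n g).

Lemma dotpD (u a b : V) : dotp u (a + b) = dotp u a + dotp u b.
Proof. by rewrite /dotp -big_split; apply: eq_bigr => i _; rewrite mxE mulrDr. Qed.

Lemma dotpZ (u a : V) l : dotp u (l *: a) = l * dotp u a.
Proof. by rewrite /dotp mulr_sumr; apply: eq_bigr => i _; rewrite mxE mulrCA. Qed.

Lemma dotp_continuous (u : V) : continuous (dotp u).
Proof.
apply: (@continuous_big R^o _ +%R 0 xpredT add_continuous) => i _ v.
by apply: continuousM; [exact: cst_continuous | exact: coord_continuous].
Qed.

Lemma polyhedron_cone (P : set V) : polyhedron g P ->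
  exists K, [/\ convex_cone K, closed K & P = X `&` K].
Proof.
move=> [F [Fhalf [_ [PE _]]]].
exists (\bigcap_(S in F) \bigcap_(u in [set u | S = halfspace_of g u])
          [set v | 0 <= dotp u v]); split.
- split => [a b Ka Kb|l a l0 Ka] S FS u Su /=.
    by rewrite dotpD addr_ge0 //; [exact (Ka S FS u Su) | exact (Kb S FS u Su)].
  by rewrite dotpZ; apply: mulr_ge0; [exact: ltW | exact (Ka S FS u Su)].
- apply: closed_bigI => S _; apply: closed_bigI => u _.
  exact (@preimage_closed _ _ (dotp u) _ (fun v _ => @dotp_continuous u v)
    (closed_ge (y := 0))).
rewrite PE; apply/seteqP; split => v [Xv Hv]; split => // S FS.
  by move=> u Su; have := Hv S FS; rewrite Su => -[].
have [H [_ [u [_ [_ [Su _]]]]]] := Fhalf S FS.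
by rewrite Su; split => //; exact (Hv S FS u Su).
Qed.

Lemma interior_withinE (A : set V) a : interior_within X A a <-> interior_in X A a.
Proof.
split => [[Aa [e e0 He]]|[Aa [e [e0 He]]]]; split => //.
  by exists e; split => // w [/ball_norm_lt aw Xw]; exact: He.
by exists e => // w aw Xw; apply: He; split => //; exact/ball_norm_lt.
Qed.

Lemma tessellation_cone_tiling T : tessellation g T -> cone_tiling X T.
Proof.
move=> [Tpoly [_ Tdisj]].
have Tcone t : T t -> exists K, [/\ convex_cone K, closed K & t = X `&` K].
  by move=> /Tpoly [Pt _]; exact: polyhedron_cone.
split.
- by move=> t /Tcone [K [cK _ tE]]; exists K.
- by move=> t /Tcone [K [_ Kcl ->]]; exact: closed_within_setI.
- by move=> t /Tpoly [_ [a ia]]; exists a; exact/interior_withinE.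
move=> t1 t2 a T1 T2 i1 i2; apply: contrapT => t12.
have := Tdisj t1 t2 T1 T2 t12; rewrite -subset0 => /(_ a); apply.
by split; apply/interior_withinE.
Qed.

Lemma tiles_at_seq T x : locally_finite_tess g T -> X x ->
  exists sx : seq (set V), forall t, t \in sx <-> T t /\ t x.
Proof.
move=> lf Xx.
have [sx sxE] : exists sx : seq (set V),
    [set t | T t /\ (t `&` [set x]) !=set0] = [set` sx].
  by apply/finite_seqP; apply: lf; [move=> _ -> | exact: compact_set1].
exists sx => t; have /= <- := congr1 (fun A => A t) sxE.
split => [[Tt [y [ty yx]]]|[Tt tx]]; last by split => //; exists x.
by split => //; rewrite -yx.
Qed.

(* Only finitely many tiles meet the unit ball around [x]; those missing [x]
   stay at positive distance from it since tiles are closed. *)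
Lemma tiles_at_cover T x (sx : seq (set V)) :
  tessellation g T -> locally_finite_tess g T -> X x ->
  (forall t, t \in sx <-> T t /\ t x) -> exists2 r, 0 < r & covers_near X sx x r.
Proof.
move=> tess lf Xx sxE.
have TT := tessellation_cone_tiling tess; have [_ [Tcov _]] := tess.
pose B := X `&` [set w | `|x - w| <= 1].
have [s1 s1E] : exists s1 : seq (set V),
    [set t | T t /\ (t `&` B) !=set0] = [set` s1].
  apply/finite_seqP; apply: lf; first by move=> w [].
  apply: bounded_closed_compact.
    exists (`|x| + 1); split; first exact: num_real.
    move=> M xM w [_ /= xw].
    rewrite distrC in xw; have := ler_normD x (w - x).
    by rewrite [x + _]addrC subrK; lra.
  apply: closedI; first exact: Xspace_closed.
  rewrite (_ : [set w | `|x - w| <= 1] = closed_ball_ normr x 1) //.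
  by rewrite -closed_ballE //; exact: closed_ball_closed.
have s1T t : t \in s1 -> T t by have /= <- := congr1 (fun A => A t) s1E; case.
pose Q (t : set V) (d : R) := ~ t x -> forall w, `|x - w| < d -> ~ t w.
have Qmono t d d' : Q t d -> 0 < d' -> d' <= d -> Q t d'.
  by move=> Qd _ d'd ntx w xw; apply: Qd => //; lra.
have Qex t : t \in s1 -> exists2 d, 0 < d & Q t d.
  move=> /s1T Tt; have [tx|ntx] := pselect (t x); first by exists 1.
  by have [d d0 Hd] := tile_closed TT Tt Xx ntx; exists d => // _.
have [d d0 Hd] := seq_common_radius Qmono Qex.
exists (minr d 1) => [|w Xw]; first by rewrite lt_min d0 ltr01.
rewrite lt_min => /andP [xwd xw1].
have [t Tt tw] := Tcov w Xw; exists t => //; apply/sxE; split => //.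
have ts1 : t \in s1.
  have /= <- := congr1 (fun A => A t) s1E.
  by split => //; exists w; split => //; split => //; exact: ltW.
by apply: contrapT => ntx; exact: Hd t ts1 ntx w xwd tw.
Qed.

Lemma tg_hullP (C : set V) w : C `<=` X -> C !=set0 ->
  tg_hull g C w <-> X w /\ forall L : {vspace V}, (forall c, C c -> c \in L) -> w \in L.
Proof.
move=> CX [c0 Cc0]; split => [[Xw Hw]|[Xw Hw]].
  split => // L CL; have ML : tg_submanifold g (X `&` [set v | v \in L]).
    by exists L; split => //; exists c0; split; [exact: CX | exact: CL].
  by have [] := Hw _ ML (fun c Cc => conj (CX c Cc) (CL c Cc)).
split => // M [L [ME _]] CM; rewrite ME; split => //; apply: Hw => c Cc.
by have := CM c Cc; rewrite ME => -[].
Qed.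

End ModelTilings.

Section LocalCellHull.
Variables (R : realType) (n : nat) (g : geometry).
Local Notation V := 'rV[R]_(n.+1).
Local Notation X := (@Xspace R n g).
Variables (p : central_projection X) (T : set (set V)) (TT : cone_tiling X T).
Variables (x : V) (sx : seq (set V)) (r : R).
Hypotheses (Xx : X x) (sx_tiles : forall t, t \in sx -> T t).
Hypotheses (sx_x : forall t, t \in sx -> t x) (r_gt0 : 0 < r).
Hypothesis sx_cover : covers_near X sx x r.

Lemma local_cell_hullP w : tg_hull g (local_cell sx) w <->
  X w /\ forall L : {vspace V}, (forall c, local_cell sx c -> c \in L) -> w \in L.
Proof.
have [t0 t0s _] : exists2 t, t \in sx & t x.
  by apply: sx_cover => //; rewrite subrr normr0.
by apply: tg_hullP; [move=> c /(_ t0 t0s) /(tile_subX TT (sx_tiles t0s)) | exists x].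
Qed.

Lemma rel_interior_local_cell : rel_interior g (local_cell sx) x.
Proof.
split => //; exists r; split => // w [/ball_norm_lt xw /local_cell_hullP [Xw Hw]].
apply: (lineality_local_cell p TT sx_tiles sx_x sx_cover Xw xw).
have [L HL] := vspace_of_pred (lineality0 X sx_x) (lineality_lin sx_x).
by apply/HL/Hw => c Cc; apply/HL; exact (local_cell_lineality p TT Xx sx_tiles sx_x r_gt0 sx_cover Cc).
Qed.

(* Push [y] slightly away from [x] along the hull: the result stays in the
   cell, which forces [t] to be a tile at [x]. *)
Lemma tile_meets_rel_interior t : T t -> rel_interior g (local_cell sx) `&` t !=set0 ->
  t \in sx.
Proof.
move=> Tt [y [[Cy [e [e0 He]]] ty]].
have [l l0 [Dv yv]] := cp_proj_ray p (y - x) (tile_subX TT Tt ty) e0.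
apply: (tile_mem_local_cell_ray TT Xx sx_tiles r_gt0 sx_cover Tt ty l0 Dv).
apply: He; split; first exact/ball_norm_lt.
apply/local_cell_hullP; split => [|L CL]; first exact: cp_proj_X.
have xL : x \in L by apply: CL.
have yL : y \in L by apply: CL.
by rewrite /cp_proj memvZ // memvD // memvZ // memvB.
Qed.

End LocalCellHull.

Theorem lemma4p2 (R : realType) (n : nat) (g : geometry)
  (T : set (set 'rV[R]_(n.+1))) (x : 'rV[R]_(n.+1)) :
  tessellation g T -> locally_finite_tess g T -> Xspace g x ->
  let C := \bigcap_(t in [set t | T t /\ t x]) t in
  cell g T C /\ rel_interior g C x.
Proof.
move=> tess lf Xx C.
have [p] := Xspace_projection R n g.
have TT := tessellation_cone_tiling tess.
have [sx sxE] := tiles_at_seq lf Xx.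
have [r r0 cov] := tiles_at_cover tess lf Xx sxE.
have sx_tiles t : t \in sx -> T t by move/sxE => [].
have sx_x t : t \in sx -> t x by move/sxE => [].
have CE : C = local_cell sx.
  by apply/seteqP; split => c Cc t ts; apply: Cc; exact/sxE.
split; last by rewrite CE; exact (rel_interior_local_cell p TT Xx sx_tiles sx_x r0 cov).
split.
  exists [set t | T t /\ t x]; split => [t []//|]; split => //.
  by have [t Tt tx] := tess.2.1 x Xx; exists t.
rewrite CE; split; first by exists x.
move=> t Tt; have [tx|ntx] := pselect (t x).
  by left => c Cc; apply: Cc; apply/sxE.
right; apply/seteqP; split => // y Cyt; apply: ntx.
have ts := tile_meets_rel_interior p TT Xx sx_tiles sx_x r0 cov Tt (ex_intro _ y Cyt).
exact: sx_x ts.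
Qed.
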